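(* For every set $\Gamma\cup\{\varphi\}$ of formulas over $\Sigma^\circ$: if $\Gamma\vDash^{\mathsf{RN}}_{\mathcal{M}_{\bf Cila}}\varphi$ then $\Gamma\vdash_{\bf Cila}\varphi$.
   Context: $\Sigma^\circ$ has unary $\neg,\circ$ and binary $\wedge,\vee,\to$. ${\bf Cila}$ is the Hilbert calculus with Modus Ponens as only rule and axiom schemata: $\alpha\to(\beta\to\alpha)$; $(\alpha\to(\beta\to\gamma))\to((\alpha\to\beta)\to(\alpha\to\gamma))$; $\alpha\to(\beta\to(\alpha\wedge\beta))$; $(\alpha\wedge\beta)\to\alpha$; $(\alpha\wedge\beta)\to\beta$; $\alpha\to(\alpha\vee\beta)$; $\beta\to(\alpha\vee\beta)$; $(\alpha\to\gamma)\to((\beta\to\gamma)\to((\alpha\vee\beta)\to\gamma))$; $\alpha\vee\neg\alpha$; $\alpha\vee(\alpha\to\beta)$; $\circ\alpha\to(\alpha\to(\neg\alpha\to\beta))$; $\neg(\alpha\wedge\neg\alpha)\to\circ\alpha$; $\neg\circ\alpha\to(\alpha\wedge\neg\alpha)$; $\neg\neg\alpha\to\alpha$; $(\circ\alpha\wedge\circ\beta)\to\circ(\alpha\#\beta)$ for $\#\in\{\vee,\wedge,\to\}$. $\mathcal{A}_{\bf Cila}$ is the $\Sigma^\circ$-multialgebra with universe $\{F,t,T\}$, $D=\{t,T\}$, and: $F\tilde\vee F=\{F\}$, $F\tilde\vee T=T\tilde\vee F=T\tilde\vee T=\{T\}$, $x\tilde\vee y=D$ whenever $t\in\{x,y\}$;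 $x\tilde\wedge y=\{F\}$ if $F\in\{x,y\}$, $T\tilde\wedge T=\{T\}$, $t\tilde\wedge t=t\tilde\wedge T=T\tilde\wedge t=D$; $\tilde\neg F=\{T\}$, $\tilde\neg t=D$, $\tilde\neg T=\{F\}$; $F\tilde\to F=F\tilde\to T=T\tilde\to T=\{T\}$, $t\tilde\to F=T\tilde\to F=\{F\}$, $x\tilde\to t=D$ for all $x$, $t\tilde\to T=D$; $\tilde\circ F=\tilde\circ T=\{T\}$, $\tilde\circ t=\{F\}$. A valuation is a map with $\nu(\#\alpha)\in\tilde\#\nu(\alpha)$ and $\nu(\alpha\#\beta)\in\nu(\alpha)\tilde\#\nu(\beta)$. $\mathcal{F}_{\bf Cila}$ is the set of valuations with $\nu(\alpha)=t\Rightarrow\nu(\alpha\wedge\neg\alpha)=T$ for all $\alpha$. $\Gamma\vDash^{\mathsf{RN}}_{\mathcal{M}_{\bf Cila}}\varphi$ iff every $\nu\in\mathcal{F}_{\bf Cila}$ with $\nu[\Gamma]\subseteq D$ has $\nu(\varphi)\in D$. *)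

Inductive form : Type :=
| Var  : nat -> form
| Neg  : form -> form
| Circ : form -> form
| And  : form -> form -> form
| Or   : form -> form -> form
| Imp  : form -> form -> form.

Inductive CilaAxiom : form -> Prop :=
| Ax1 a b : CilaAxiom (Imp a (Imp b a))
| Ax2 a b c : CilaAxiom (Imp (Imp a (Imp b c)) (Imp (Imp a b) (Imp a c)))
| Ax3 a b : CilaAxiom (Imp a (Imp b (And a b)))
| Ax4 a b : CilaAxiom (Imp (And a b) a)
| Ax5 a b : CilaAxiom (Imp (And a b) b)
| Ax6 a b : CilaAxiom (Imp a (Or a b))
| Ax7 a b : CilaAxiom (Imp b (Or a b))
| Ax8 a b c : CilaAxiom (Imp (Imp a c) (Imp (Imp b c) (Imp (Or a b) c)))
| Ax9 a : CilaAxiom (Or a (Neg a))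
| Ax10 a b : CilaAxiom (Or a (Imp a b))
| Ax11 a b : CilaAxiom (Imp (Circ a) (Imp a (Imp (Neg a) b)))
| Ax12 a : CilaAxiom (Imp (Neg (And a (Neg a))) (Circ a))
| Ax13 a : CilaAxiom (Imp (Neg (Circ a)) (And a (Neg a)))
| Ax14 a : CilaAxiom (Imp (Neg (Neg a)) a)
| Ax15or a b : CilaAxiom (Imp (And (Circ a) (Circ b)) (Circ (Or a b)))
| Ax15and a b : CilaAxiom (Imp (And (Circ a) (Circ b)) (Circ (And a b)))
| Ax15imp a b : CilaAxiom (Imp (And (Circ a) (Circ b)) (Circ (Imp a b))).

Inductive CilaDerives (Gamma : form -> Prop) : form -> Prop :=
| D_hyp phi : Gamma phi -> CilaDerives Gamma phi
| D_ax phi : CilaAxiom phi -> CilaDerives Gamma phi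
| D_mp phi psi : CilaDerives Gamma phi -> CilaDerives Gamma (Imp phi psi) ->
                 CilaDerives Gamma psi.

Inductive V3 : Type := VF | Vt | VT.

Definition designated (x : V3) : Prop := x = Vt \/ x = VT.

(** Multioperations, given as membership relations: [op x y z] means z ∈ x op y. *)
Definition mneg (x z : V3) : Prop :=
  match x with
  | VF => z = VT
  | Vt => designated z
  | VT => z = VF
  end.

Definition mcirc (x z : V3) : Prop :=
  match x with
  | VF => z = VT
  | Vt => z = VF
  | VT => z = VT
  end.

Definition mor (x y z : V3) : Prop :=
  match x, y with
  | Vt, _ | _, Vt => designated z
  | VF, VF => z = VF
  | _, _ => z = VT
  end.

Definition mand (x y z : V3) : Prop :=
  match x, y with
  | VF, _ | _, VF => z = VF
  | VT, VT => z = VT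
  | _, _ => designated z
  end.

Definition mimp (x y z : V3) : Prop :=
  match x, y with
  | _, Vt => designated z
  | Vt, VT => designated z
  | Vt, VF | VT, VF => z = VF
  | _, _ => z = VT
  end.

Definition valuation (nu : form -> V3) : Prop :=
  forall a b : form,
    mneg (nu a) (nu (Neg a)) /\
    mcirc (nu a) (nu (Circ a)) /\
    mand (nu a) (nu b) (nu (And a b)) /\
    mor (nu a) (nu b) (nu (Or a b)) /\
    mimp (nu a) (nu b) (nu (Imp a b)).

Definition F_Cila (nu : form -> V3) : Prop :=
  valuation nu /\
  (forall a : form, nu a = Vt -> nu (And a (Neg a)) = VT).

Definition RN_consequence (Gamma : form -> Prop) (phi : form) : Prop :=
  forall nu : form -> V3, F_Cila nu ->
    (forall g, Gamma g -> designated (nu g)) -> designated (nu phi).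

From Stdlib Require Import Classical ClassicalEpsilon Lia Cantor.

(** Suppose [Gamma] does not derive [phi].  Since the deduction theorem holds
    for Cila, Lindenbaum's construction (formulas are enumerated through an
    injective coding into [nat]) extends [Gamma] to a [phi]-saturated set
    [Delta]: closed under derivability, not containing [phi], and such that
    adding any missing formula yields [phi].  Using the axioms, a saturated set
    is prime and behaves classically on the positive connectives, while the
    value of a formula [p] is read off from the membership of [p] and [Neg p]:
    [F] if [p] is out, [t] if both are in, [T] otherwise.  This canonical map is
    a valuation of A_Cila satisfying the restriction of F_Cila, it designates
    exactly the members of [Delta], so it designates [Gamma] but not [phi]. *)

Fixpoint code (f : form) : nat :=
  match f with
  | Var n => Cantor.to_nat (0, n)
  | Neg a => Cantor.to_nat (1, code a)
  | Circ a => Cantor.to_nat (2, code a)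
  | And a b => Cantor.to_nat (3, Cantor.to_nat (code a, code b))
  | Or a b => Cantor.to_nat (4, Cantor.to_nat (code a, code b))
  | Imp a b => Cantor.to_nat (5, Cantor.to_nat (code a, code b))
  end.

(** Cantor's pairing is injective, being left-inverted by [Cantor.of_nat]. *)
Lemma cantor_pair_inj (a b c d : nat) :
  Cantor.to_nat (a, b) = Cantor.to_nat (c, d) -> a = c /\ b = d.
Proof.
  intros H.
  assert (Hp : (a, b) = (c, d)).
  { rewrite <- (Cantor.cancel_of_to (a, b)), <- (Cantor.cancel_of_to (c, d)).
    now rewrite H. }
  now injection Hp.
Qed.

Lemma code_inj (f g : form) : code f = code g -> f = g.
Proof.
  revert g; induction f; destruct g; cbn [code]; intros H;
    apply cantor_pair_inj in H; destruct H as [Htag H]; try discriminate;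
    try (f_equal; auto; fail).
  all: apply cantor_pair_inj in H; destruct H; f_equal; auto.
Qed.

Definition extend (G : form -> Prop) (a : form) : form -> Prop :=
  fun x => G x \/ x = a.

Lemma derives_mono (G H : form -> Prop) (x : form) :
  (forall y, G y -> H y) -> CilaDerives G x -> CilaDerives H x.
Proof.
  intros Hsub Hx; induction Hx as [x Hx | x Hx | x y _ IHx _ IHxy].
  - apply D_hyp, Hsub, Hx.
  - apply D_ax, Hx.
  - eapply D_mp; [exact IHx | exact IHxy].
Qed.

Lemma derives_imp_refl (G : form -> Prop) (a : form) : CilaDerives G (Imp a a).
Proof.
  eapply D_mp; [apply D_ax, (Ax1 a a)|].
  eapply D_mp; [apply D_ax, (Ax1 a (Imp a a))|].
  apply D_ax, Ax2.
Qed.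

Lemma deduction (G : form -> Prop) (a b : form) :
  CilaDerives (extend G a) b -> CilaDerives G (Imp a b).
Proof.
  induction 1 as [x [Hx | ->] | x Hx | x y _ IHx _ IHxy].
  - eapply D_mp; [apply D_hyp, Hx | apply D_ax, Ax1].
  - apply derives_imp_refl.
  - eapply D_mp; [apply D_ax, Hx | apply D_ax, Ax1].
  - eapply D_mp; [exact IHx|].
    eapply D_mp; [exact IHxy | apply D_ax, Ax2].
Qed.

Record saturated (phi : form) (Delta : form -> Prop) : Prop := {
  sat_closed : forall p, CilaDerives Delta p -> Delta p;
  sat_avoids : ~ Delta phi;
  sat_maximal : forall p, ~ Delta p -> CilaDerives (extend Delta p) phi
}.

Section Lindenbaum.

Variable Gamma : form -> Prop.
Variable phi : form.

(** Stage [n + 1] adds the formula coded by [n] when this keeps [phi]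
    underivable; by injectivity of [code] at most one formula is added. *)
Fixpoint stage (n : nat) : form -> Prop :=
  match n with
  | 0 => Gamma
  | S n => fun x =>
      stage n x \/ (code x = n /\ ~ CilaDerives (extend (stage n) x) phi)
  end.

Definition limit (x : form) : Prop := exists n, stage n x.

Lemma stage_mono (n m : nat) (x : form) : n <= m -> stage n x -> stage m x.
Proof. induction 1; cbn; auto. Qed.

(** Derivations are finite, so they only use premises of one stage. *)
Lemma limit_compact (x : form) :
  CilaDerives limit x -> exists n, CilaDerives (stage n) x.
Proof.
  induction 1 as [x [n Hn] | x Hx | x y _ [n1 H1] _ [n2 H2]].
  - exists n; now apply D_hyp.
  - exists 0; now apply D_ax.
  - exists (max n1 n2); eapply D_mp.
    + eapply derives_mono; [|exact H1]; intros; eapply stage_mono; [|eauto]; lia.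
    + eapply derives_mono; [|exact H2]; intros; eapply stage_mono; [|eauto]; lia.
Qed.

Hypothesis Gamma_nder : ~ CilaDerives Gamma phi.

Lemma stage_nder (n : nat) : ~ CilaDerives (stage n) phi.
Proof.
  induction n as [|n IHn]; cbn; [exact Gamma_nder|].
  destruct (classic (exists a, code a = n /\ ~ CilaDerives (extend (stage n) a) phi))
    as [[a [Ha Hnd]] | Hnone]; intros Hder.
  - apply Hnd; revert Hder; apply derives_mono.
    intros y [Hy | [Hy _]]; [now left | right; apply code_inj; congruence].
  - apply IHn; revert Hder; apply derives_mono.
    intros y [Hy | Hy]; [exact Hy | exfalso; apply Hnone; now exists y].
Qed.

Lemma limit_saturated : saturated phi limit.
Proof.
  assert (Hnder : ~ CilaDerives limit phi).
  { intros H; destruct (limit_compact _ H) as [n Hn]; exact (stage_nder n Hn). }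
  assert (Hmax : forall p, ~ limit p -> CilaDerives (extend limit p) phi).
  { intros p Hp; apply NNPP; intros Hnd; apply Hp.
    exists (S (code p)); cbn; right; split; [reflexivity|].
    intros Hder; apply Hnd; revert Hder; apply derives_mono.
    intros y [Hy | Hy]; [left; now exists (code p) | now right]. }
  split; [| intros H; apply Hnder, D_hyp, H | exact Hmax].
  intros p Hp; apply NNPP; intros Hnp.
  apply Hnder; eapply D_mp; [exact Hp | apply deduction, Hmax, Hnp].
Qed.

End Lindenbaum.

Lemma lindenbaum (Gamma : form -> Prop) (phi : form) :
  ~ CilaDerives Gamma phi ->
  exists Delta, (forall g, Gamma g -> Delta g) /\ saturated phi Delta.
Proof.
  intros Hnd; exists (limit Gamma phi); split.
  - intros g Hg; now exists 0.
  - now apply limit_saturated.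
Qed.

Section SaturatedSet.

Variable phi : form.
Variable Delta : form -> Prop.
Hypothesis HDelta : saturated phi Delta.

Lemma mem_axiom (p : form) : CilaAxiom p -> Delta p.
Proof. intros; now apply (sat_closed _ _ HDelta), D_ax. Qed.

Lemma mem_mp (a b : form) : Delta a -> Delta (Imp a b) -> Delta b.
Proof.
  intros Ha Hab; apply (sat_closed _ _ HDelta).
  apply (D_mp _ a); apply D_hyp; assumption.
Qed.

Lemma mem_imp_phi (p : form) : ~ Delta p -> Delta (Imp p phi).
Proof.
  intros; apply (sat_closed _ _ HDelta), deduction, (sat_maximal _ _ HDelta); auto.
Qed.

(** Saturated sets are prime, by [Ax8] and [mem_imp_phi]. *)
Lemma mem_or_elim (a b : form) : Delta (Or a b) -> Delta a \/ Delta b.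
Proof.
  intros H; apply NNPP; intros Hn; apply (sat_avoids _ _ HDelta).
  apply (mem_mp (Or a b)); [exact H|].
  apply (mem_mp (Imp b phi)); [apply mem_imp_phi; tauto|].
  apply (mem_mp (Imp a phi)); [apply mem_imp_phi; tauto|].
  apply mem_axiom, Ax8.
Qed.

Lemma mem_or_l (a b : form) : Delta a -> Delta (Or a b).
Proof. intros; eapply mem_mp; [eassumption | apply mem_axiom, Ax6]. Qed.

Lemma mem_or_r (a b : form) : Delta b -> Delta (Or a b).
Proof. intros; eapply mem_mp; [eassumption | apply mem_axiom, Ax7]. Qed.

Lemma mem_and (a b : form) : Delta a -> Delta b -> Delta (And a b).
Proof.
  intros; eapply mem_mp; [|eapply mem_mp; [|apply mem_axiom, Ax3]]; eassumption.
Qed.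

Lemma mem_and_l (a b : form) : Delta (And a b) -> Delta a.
Proof. intros; eapply mem_mp; [eassumption | apply mem_axiom, Ax4]. Qed.

Lemma mem_and_r (a b : form) : Delta (And a b) -> Delta b.
Proof. intros; eapply mem_mp; [eassumption | apply mem_axiom, Ax5]. Qed.

Lemma mem_imp_of_concl (a b : form) : Delta b -> Delta (Imp a b).
Proof. intros; eapply mem_mp; [eassumption | apply mem_axiom, Ax1]. Qed.

Lemma mem_imp_of_not_prem (a b : form) : ~ Delta a -> Delta (Imp a b).
Proof. intros; destruct (mem_or_elim _ _ (mem_axiom _ (Ax10 a b))); tauto. Qed.

Lemma mem_neg_of_not (a : form) : ~ Delta a -> Delta (Neg a).
Proof. intros; destruct (mem_or_elim _ _ (mem_axiom _ (Ax9 a))); tauto. Qed.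

Lemma mem_negneg (a : form) : Delta (Neg (Neg a)) -> Delta a.
Proof. intros; eapply mem_mp; [eassumption | apply mem_axiom, Ax14]. Qed.

Lemma mem_circ_explosion (a : form) :
  Delta (Circ a) -> Delta a -> Delta (Neg a) -> False.
Proof.
  intros Hc Ha Hn; apply (sat_avoids _ _ HDelta).
  apply (mem_mp (Neg a)); [exact Hn|]; apply (mem_mp a); [exact Ha|].
  apply (mem_mp (Circ a)); [exact Hc | apply mem_axiom, Ax11].
Qed.

Lemma mem_circ_intro (a : form) : ~ (Delta a /\ Delta (Neg a)) -> Delta (Circ a).
Proof.
  intros H; eapply mem_mp; [|apply mem_axiom, Ax12].
  apply mem_neg_of_not; intros Han; apply H.
  split; [eapply mem_and_l | eapply mem_and_r]; exact Han.
Qed.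

Lemma mem_neg_circ (a : form) : Delta (Neg (Circ a)) -> Delta a /\ Delta (Neg a).
Proof.
  intros H.
  assert (Han : Delta (And a (Neg a))) by (eapply mem_mp; [exact H | apply mem_axiom, Ax13]).
  split; [eapply mem_and_l | eapply mem_and_r]; exact Han.
Qed.

Definition canonical (p : form) : V3 :=
  if excluded_middle_informative (Delta p) then
    if excluded_middle_informative (Delta (Neg p)) then Vt else VT
  else VF.

Lemma canonical_F (p : form) : canonical p = VF <-> ~ Delta p.
Proof.
  unfold canonical; repeat destruct excluded_middle_informative;
    split; intros; try discriminate; tauto.
Qed.

Lemma canonical_t (p : form) : canonical p = Vt <-> Delta p /\ Delta (Neg p).
Proof.
  unfold canonical; repeat destruct excluded_middle_informative;
    split; intros; try discriminate; tauto.
Qed.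

Lemma canonical_designated (p : form) : designated (canonical p) <-> Delta p.
Proof.
  unfold designated, canonical; repeat destruct excluded_middle_informative;
    split; intros H; try tauto; destruct H; discriminate.
Qed.

Lemma mem_of_canonical (p : form) : canonical p <> VF -> Delta p.
Proof. intros H; apply NNPP; intros Hp; apply H, canonical_F, Hp. Qed.

Lemma circ_of_canonical (p : form) : canonical p <> Vt -> Delta (Circ p).
Proof. intros H; apply mem_circ_intro; intros Hp; apply H, canonical_t, Hp. Qed.

Lemma canonical_T (p : form) : Delta p -> Delta (Circ p) -> canonical p = VT.
Proof.
  intros Hp Hc; unfold canonical.
  destruct excluded_middle_informative as [_|]; [|contradiction].
  destruct excluded_middle_informative as [Hn|]; [|reflexivity].
  exfalso; exact (mem_circ_explosion p Hc Hp Hn).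
Qed.

Lemma canonical_neg (a : form) : mneg (canonical a) (canonical (Neg a)).
Proof.
  destruct (canonical a) eqn:Ha; cbn.
  - apply canonical_F in Ha; unfold canonical.
    destruct excluded_middle_informative as [_|Hn]; [|now apply mem_neg_of_not in Ha].
    destruct excluded_middle_informative as [Hnn|]; [|reflexivity].
    now apply mem_negneg in Hnn.
  - apply canonical_designated, canonical_t, Ha.
  - apply canonical_F; intros Hn.
    assert (Ht : canonical a = Vt)
      by (apply canonical_t; split; [apply mem_of_canonical; congruence | exact Hn]).
    congruence.
Qed.

Lemma canonical_circ (a : form) : mcirc (canonical a) (canonical (Circ a)).
Proof.
  assert (Hclassical : canonical a <> Vt -> canonical (Circ a) = VT).
  { intros Ha; apply canonical_T; [now apply circ_of_canonical|].
    apply mem_circ_intro; intros [_ Hnc]; apply Ha, canonical_t, mem_neg_circ, Hnc. }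
  destruct (canonical a) eqn:Ha; cbn; try (apply Hclassical; congruence).
  apply canonical_F; intros Hc; apply canonical_t in Ha.
  exact (mem_circ_explosion a Hc (proj1 Ha) (proj2 Ha)).
Qed.

Lemma canonical_and (a b : form) :
  mand (canonical a) (canonical b) (canonical (And a b)).
Proof.
  assert (HF : ~ Delta a \/ ~ Delta b -> canonical (And a b) = VF).
  { intros Hab; apply canonical_F; intros H.
    destruct Hab as [Hn | Hn]; apply Hn; [eapply mem_and_l | eapply mem_and_r]; exact H. }
  assert (Hin : canonical a <> VF -> canonical b <> VF -> Delta (And a b)).
  { intros; apply mem_and; now apply mem_of_canonical. }
  destruct (canonical a) eqn:Ha, (canonical b) eqn:Hb; cbn;
    try (apply HF; rewrite <- !canonical_F; tauto);
    try (apply canonical_designated, Hin; congruence).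
  apply canonical_T; [apply Hin; congruence|].
  eapply mem_mp; [|apply mem_axiom, Ax15and].
  apply mem_and; apply circ_of_canonical; congruence.
Qed.

Lemma canonical_or (a b : form) :
  mor (canonical a) (canonical b) (canonical (Or a b)).
Proof.
  assert (Hin : canonical a <> VF \/ canonical b <> VF -> Delta (Or a b)).
  { intros [H | H]; [apply mem_or_l | apply mem_or_r]; now apply mem_of_canonical. }
  assert (HF : canonical a = VF -> canonical b = VF -> canonical (Or a b) = VF).
  { intros Ha Hb; apply canonical_F; intros H.
    apply canonical_F in Ha; apply canonical_F in Hb.
    destruct (mem_or_elim _ _ H); tauto. }
  assert (HT : canonical a <> VF \/ canonical b <> VF ->
               canonical a <> Vt -> canonical b <> Vt -> canonical (Or a b) = VT).
  { intros Hab Ha Hb; apply canonical_T; [now apply Hin|].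
    eapply mem_mp; [|apply mem_axiom, Ax15or].
    apply mem_and; now apply circ_of_canonical. }
  destruct (canonical a) eqn:Ha, (canonical b) eqn:Hb; cbn;
    first [ now apply HF
          | apply HT; [(left + right); congruence | congruence | congruence]
          | apply canonical_designated, Hin; (left + right); congruence ].
Qed.

Lemma canonical_imp (a b : form) :
  mimp (canonical a) (canonical b) (canonical (Imp a b)).
Proof.
  assert (Hconcl : canonical b <> VF -> Delta (Imp a b)).
  { intros; now apply mem_imp_of_concl, mem_of_canonical. }
  assert (HF : canonical a <> VF -> canonical b = VF -> canonical (Imp a b) = VF).
  { intros Ha Hb; apply canonical_F; intros H; apply canonical_F in Hb; apply Hb.
    apply (mem_mp a); [now apply mem_of_canonical | exact H]. }
  assert (HT : Delta (Imp a b) ->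
               canonical a <> Vt -> canonical b <> Vt -> canonical (Imp a b) = VT).
  { intros Hab Ha Hb; apply canonical_T; [exact Hab|].
    eapply mem_mp; [|apply mem_axiom, Ax15imp].
    apply mem_and; now apply circ_of_canonical. }
  assert (Hprem : canonical a = VF -> Delta (Imp a b)).
  { intros Ha; apply mem_imp_of_not_prem, canonical_F, Ha. }
  destruct (canonical a) eqn:Ha, (canonical b) eqn:Hb; cbn;
    first [ apply canonical_designated, Hconcl; congruence
          | apply HF; congruence
          | apply HT; [now apply Hprem | congruence | congruence]
          | apply HT; [apply Hconcl | | ]; congruence ].
Qed.

Lemma canonical_restricted (a : form) :
  canonical a = Vt -> canonical (And a (Neg a)) = VT.
Proof.
  intros Ha; apply canonical_t in Ha; apply canonical_T.
  - now apply mem_and.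
  - apply mem_circ_intro; intros [_ Hn].
    apply (mem_circ_explosion a); try tauto.
    eapply mem_mp; [exact Hn | apply mem_axiom, Ax12].
Qed.

Lemma canonical_in_F_Cila : F_Cila canonical.
Proof.
  split; [|exact canonical_restricted].
  intros a b; repeat split;
    [apply canonical_neg | apply canonical_circ | apply canonical_and
    | apply canonical_or | apply canonical_imp].
Qed.

End SaturatedSet.

Theorem mainTheorem7 (Gamma : form -> Prop) (phi : form) :
  RN_consequence Gamma phi -> CilaDerives Gamma phi.
Proof.
  intros Hcons; apply NNPP; intros Hnder.
  destruct (lindenbaum Gamma phi Hnder) as [Delta [HGamma HDelta]].
  apply (sat_avoids _ _ HDelta), (canonical_designated Delta).
  apply Hcons; [exact (canonical_in_F_Cila _ _ HDelta)|].
  intros g Hg; apply canonical_designated, HGamma, Hg.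
Qed.
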